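(* Let $\omega(y)=\sum_{k\ge0}a_ky^k$ ($a_k\ge 0$, radius of convergence $R>0$) and let $V$ be the covariance of the power series distribution of $\omega$. Then for every $n\in\mathbb{N}$ and every constant $C>0$, the function $x\mapsto n^2V(x/n)$ is the covariance of the power series distribution of the function $C\omega(y^n)$.
   Context: For a power series $\omega$ with non-negative coefficients and radius of convergence $R>0$, the power series distribution (PSD) of $\omega$ with parameter $y\in(0,R)$ is the law on $\{0,1,2,\dots\}$ given by $P\{\xi=k\}=a_ky^k/\omega(y)$. Its mean is $x(y)=y\omega'(y)/\omega(y)$ and its variance is $y\,x'(y)>0$ (nondegenerate case), so $x(\cdot)$ has an inverse $y=f(x)$ on its range. The covariance of the PSD of $\omega$ is the function $V(x)=f(x)/f'(x)$, i.e. the variance expressed as a function of the mean $x$. *)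

From Stdlib Require Import Reals Lra Arith.
From Coquelicot Require Import Coquelicot.
Open Scope R_scope.

(* A power series omega(y) = sum_k a_k y^k is given by its coefficient
   sequence a; omega(y) = PSeries a y, radius of convergence CV_radius a. *)

Definition in_param_range (a : nat -> R) (y : R) : Prop :=
  0 < y /\ Rbar_lt (Finite y) (CV_radius a).

Definition psd_mean (a : nat -> R) (y : R) : R :=
  y * Derive (PSeries a) y / PSeries a y.

(* Nondegenerate PSD: the law is not a point mass, i.e. at least two
   coefficients are nonzero (equivalently, the variance y x'(y) is > 0). *)
Definition psd_nondegenerate (a : nat -> R) : Prop :=
  exists i j : nat, i <> j /\ 0 < a i /\ 0 < a j.

(* V is the covariance of the PSD of omega: with f the inverse of the mean
   function y |-> x(y) on (0,R), V(x) = f(x)/f'(x) for every x in the range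
   of the mean function. *)
Definition psd_covariance (a : nat -> R) (V : R -> R) : Prop :=
  exists f : R -> R,
    (forall y, in_param_range a y -> f (psd_mean a y) = y) /\
    (forall y, in_param_range a y ->
        ex_derive f (psd_mean a y) /\
        V (psd_mean a y) = f (psd_mean a y) / Derive f (psd_mean a y)).

(* Coefficients of the power series C * omega(y^n) (for n >= 1):
   the coefficient of y^k is C * a_(k/n) if n divides k, and 0 otherwise. *)
Definition scaled_series (C : R) (n : nat) (a : nat -> R) (k : nat) : R :=
  if Nat.eqb (k mod n) 0 then C * a (k / n)%nat else 0.

(** The mean of the PSD of [C ω(y^n)] is [x_b(y) = n x(y^n)], because that
    series converges wherever [ω] converges at [y^n] and its logarithmic
    derivative is [n y^(n-1) ω'(y^n)/ω(y^n)].  Hence if [f] inverts [x], then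
    [g x = f(x/n)^(1/n)] inverts [x_b], and [g'/g] at [x] is [f'/(n^2 f)] at
    [x/n]; so [g/g'] is [n^2 V(x/n)]. *)

From Stdlib Require Import Reals Lra Lia.
From Coquelicot Require Import Coquelicot.
Open Scope R_scope.

Lemma pow_lt_compat_l (x y : R) (k : nat) :
  0 <= x < y -> (0 < k)%nat -> x ^ k < y ^ k.
Proof.
  intros Hxy Hk; destruct k as [|k]; [lia|]; simpl.
  assert (x ^ k <= y ^ k) by (apply pow_incr; lra).
  assert (0 <= x ^ k) by (apply pow_le; lra).
  assert (0 < y ^ k) by (apply pow_lt; lra).
  nra.
Qed.

Lemma Rpower_pow_inv (y : R) (k : nat) :
  0 < y -> (0 < k)%nat -> Rpower (y ^ k) (/ INR k) = y.
Proof.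
  intros Hy Hk.
  assert (0 < INR k) by (apply lt_0_INR; exact Hk).
  rewrite <- Rpower_pow, Rpower_mult, Rinv_r by lra.
  now apply Rpower_1.
Qed.

Lemma locally_Rabs_Rbar_lt (r : Rbar) (y : R) :
  Rbar_lt (Rabs y) r -> locally y (fun t => Rbar_lt (Rabs t) r).
Proof.
  intros Hy.
  destruct (Rbar_lt_locally m_infty r (Rabs y) I Hy) as [d Hd].
  exists d; intros t Ht.
  apply (Hd (Rabs t)).
  eapply Rle_lt_trans; [apply Rabs_triang_inv2 | exact Ht].
Qed.

Lemma succ_div_cases (m K : nat) : (0 < m)%nat ->
  (S K mod m = 0 /\ S K / m = S (K / m))%nat \/
  (S K mod m <> 0 /\ S K / m = K / m)%nat.
Proof.
  intros Hm.
  pose proof (Nat.div_mod_eq K m); pose proof (Nat.mod_upper_bound K m ltac:(lia)).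
  set (q := (K / m)%nat) in *; set (r := (K mod m)%nat) in *.
  destruct (Nat.eq_dec (S r) m) as [E|E].
  - left; split.
    + symmetry; apply (Nat.mod_unique _ _ (S q)); nia.
    + symmetry; apply (Nat.div_unique _ _ (S q) 0); nia.
  - right; split.
    + rewrite <- (Nat.mod_unique (S K) m q (S r)); nia.
    + symmetry; apply (Nat.div_unique _ _ q (S r)); nia.
Qed.

Section ScaledSeries.

Variables (C : R) (n : nat) (a : nat -> R).
Hypothesis n_pos : (0 < n)%nat.

Let b := scaled_series C n a.

Lemma scaled_series_mul (j : nat) : b (n * j)%nat = C * a j.
Proof.
  unfold b, scaled_series.
  rewrite Nat.mul_comm, Nat.Div0.mod_mul, Nat.div_mul by lia.
  reflexivity.
Qed.

Lemma sum_n_scaled_series (x : R) (K : nat) :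
  sum_n (fun k => b k * x ^ k) K = C * sum_n (fun j => a j * (x ^ n) ^ j) (K / n)%nat.
Proof.
  induction K as [|K IH].
  - rewrite sum_O, Nat.Div0.div_0_l, sum_O.
    unfold b, scaled_series; rewrite Nat.Div0.mod_0_l, Nat.Div0.div_0_l; simpl; ring.
  - rewrite sum_Sn, IH; unfold b, scaled_series.
    destruct (succ_div_cases n K n_pos) as [[Hmod Hdiv]|[Hmod Hdiv]];
      rewrite Hdiv.
    + rewrite Hmod, Nat.eqb_refl, sum_Sn, <- pow_mult.
      replace (n * S (K / n))%nat with (S K)
        by (pose proof (Nat.div_mod_eq (S K) n); lia).
      unfold plus; simpl; ring.
    + rewrite (proj2 (Nat.eqb_neq _ _) Hmod); unfold plus; simpl; ring.
Qed.

Lemma PSeries_scaled_series (x : R) :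
  Rbar_lt (Rabs (x ^ n)) (CV_radius a) -> PSeries b x = C * PSeries a (x ^ n).
Proof.
  intros Hx.
  apply is_series_unique.
  assert (Ha : is_lim_seq (sum_n (fun j => a j * (x ^ n) ^ j)) (PSeries a (x ^ n))).
  { apply Series_correct, ex_series_Rabs, CV_disk_inside, Hx. }
  apply (is_lim_seq_subseq _ _ (fun K => (K / n)%nat)) in Ha.
  - apply (is_lim_seq_scal_l _ C) in Ha.
    apply (is_lim_seq_ext _ (sum_n (fun k => b k * x ^ k))) in Ha; [exact Ha|].
    intros K; symmetry; apply sum_n_scaled_series.
  - intros P [N HN]; exists (N * n)%nat; intros k Hk.
    apply HN, Nat.div_le_lower_bound; lia.
Qed.

Hypothesis C_neq0 : C <> 0.

(* The terms of [b] at [z] are bounded; those at indices [n j] are [C] times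
   the terms of [a] at [z^n]. *)
Lemma CV_radius_scaled_series_pow_le (z : R) :
  Rbar_lt (Rabs z) (CV_radius b) -> Rbar_le (z ^ n) (CV_radius a).
Proof.
  intros Hz.
  destruct (filterlim_bounded (fun k => b k * z ^ k)) as [M HM].
  { exists 0; apply ex_series_lim_0, ex_series_Rabs, CV_disk_inside, Hz. }
  apply (proj1 (CV_radius_bounded a)); exists (M / Rabs C); intros j.
  assert (HC : 0 < Rabs C) by (apply Rabs_pos_lt, C_neq0).
  apply Rmult_le_reg_l with (1 := HC).
  replace (Rabs C * (M / Rabs C)) with M by (field; lra).
  rewrite <- Rabs_mult, <- Rmult_assoc, <- scaled_series_mul, <- pow_mult.
  exact (HM (n * j)%nat).
Qed.

Lemma CV_radius_scaled_series_lt (t : R) :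
  Rbar_lt (Rabs t) (CV_radius b) -> Rbar_lt (Rabs (t ^ n)) (CV_radius a).
Proof.
  intros Ht.
  destruct (Rbar_lt_locally m_infty _ (Rabs t) I Ht) as [d Hd].
  set (z := Rabs t + d / 2).
  assert (Hz : Rbar_lt (Rabs z) (CV_radius b)).
  { pose proof (cond_pos d); pose proof (Rabs_pos t).
    apply Hd; rewrite (Rabs_pos_eq z) by (unfold z; lra); unfold z.
    replace (Rabs t + d / 2 - Rabs t) with (d / 2) by ring.
    rewrite Rabs_pos_eq; lra. }
  eapply Rbar_lt_le_trans; [|apply CV_radius_scaled_series_pow_le, Hz].
  simpl; rewrite <- RPow_abs.
  apply pow_lt_compat_l; [|exact n_pos].
  pose proof (cond_pos d); pose proof (Rabs_pos t); unfold z; lra.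
Qed.

Lemma in_param_range_scaled_series (y : R) :
  in_param_range b y -> in_param_range a (y ^ n).
Proof.
  intros [Hy Hr]; split; [now apply pow_lt|].
  rewrite <- (Rabs_pos_eq (y ^ n)) by (apply pow_le; lra).
  apply CV_radius_scaled_series_lt.
  now rewrite Rabs_pos_eq by lra.
Qed.

Lemma is_derive_PSeries_scaled_series (y : R) :
  Rbar_lt (Rabs y) (CV_radius b) ->
  is_derive (PSeries b) y (C * (INR n * y ^ pred n) * Derive (PSeries a) (y ^ n)).
Proof.
  intros Hy.
  apply (is_derive_ext_loc (fun t => C * PSeries a (t ^ n))).
  - apply (filter_imp (fun t => Rbar_lt (Rabs t) (CV_radius b))).
    + intros t Ht; symmetry.
      apply PSeries_scaled_series, CV_radius_scaled_series_lt, Ht.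
    + apply locally_Rabs_Rbar_lt, Hy.
  - auto_derive.
    + apply ex_derive_PSeries, CV_radius_scaled_series_lt, Hy.
    + change (fun x => PSeries a x) with (PSeries a); ring.
Qed.

Lemma psd_mean_scaled_series (y : R) :
  Rbar_lt (Rabs y) (CV_radius b) ->
  psd_mean b y = INR n * psd_mean a (y ^ n).
Proof.
  intros Hy; unfold psd_mean.
  rewrite (is_derive_unique _ _ _ (is_derive_PSeries_scaled_series y Hy)).
  rewrite PSeries_scaled_series by apply CV_radius_scaled_series_lt, Hy.
  assert (Hpow : y * y ^ pred n = y ^ n) by (destruct n; [lia|reflexivity]).
  set (P := PSeries a (y ^ n)); set (D := Derive (PSeries a) (y ^ n)).
  destruct (Req_dec P 0) as [E|E].
  (* Both sides are [0], as [x / 0 = 0]. *)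
  - rewrite E; unfold Rdiv; rewrite Rmult_0_r, Rinv_0; ring.
  - rewrite <- Hpow; field; auto.
Qed.

End ScaledSeries.

Section RootRescale.

Variables (f : R -> R) (c p : R).
Hypotheses (c_pos : 0 < c) (fp_pos : 0 < f p) (f_derivable : ex_derive f p).

Let g (x : R) : R := Rpower (f (x / c)) (/ c).

Lemma is_derive_root_rescale :
  is_derive g (c * p) (g (c * p) * Derive f p / (c ^ 2 * f p)).
Proof.
  assert (Hp : c * p * / c = p) by (field; lra).
  unfold g, Rpower, Rdiv; auto_derive; rewrite Hp.
  - split; [exact f_derivable|]; split; [exact fp_pos|exact I].
  - change (fun x => f x) with f; field; lra.
Qed.

Lemma ratio_Derive_root_rescale :
  ex_derive g (c * p) /\
  c ^ 2 * (f p / Derive f p) = g (c * p) / Derive g (c * p).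
Proof.
  split; [eexists; apply is_derive_root_rescale|].
  rewrite (is_derive_unique _ _ _ is_derive_root_rescale).
  assert (Hg : 0 < g (c * p)) by apply exp_pos.
  destruct (Req_dec (Derive f p) 0) as [Z|Z].
  (* Both sides are [0], as [x / 0 = 0]. *)
  - rewrite Z; unfold Rdiv; rewrite !Rmult_0_r, Rmult_0_l, Rinv_0; ring.
  - field; repeat split; lra || auto.
Qed.

End RootRescale.

Theorem lemma4 (a : nat -> R) (V : R -> R) (n : nat) (C : R) :
  (forall k, 0 <= a k) ->
  Rbar_lt (Finite 0) (CV_radius a) ->
  psd_nondegenerate a ->
  psd_covariance a V ->
  (1 <= n)%nat ->
  0 < C ->
  psd_covariance (scaled_series C n a)
    (fun x => (INR n) ^ 2 * V (x / INR n)).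
Proof.
  intros _ _ _ [f [Hinv Hcov]] Hn HC.
  assert (HnR : 0 < INR n) by (apply lt_0_INR; lia).
  assert (Hrange : forall y, in_param_range (scaled_series C n a) y ->
    in_param_range a (y ^ n)) by (apply in_param_range_scaled_series; lia || lra).
  assert (Hmean : forall y, in_param_range (scaled_series C n a) y ->
    psd_mean (scaled_series C n a) y = INR n * psd_mean a (y ^ n)).
  { intros y [Hy Hr]; apply psd_mean_scaled_series; [lia | lra |].
    now rewrite Rabs_pos_eq by lra. }
  exists (fun x => Rpower (f (x / INR n)) (/ INR n)).
  split; intros y Hy; pose proof (Hrange y Hy) as Hya; rewrite (Hmean y Hy);
    assert (Hdiv : INR n * psd_mean a (y ^ n) / INR n = psd_mean a (y ^ n))
      by (field; lra).
  - rewrite Hdiv, Hinv by exact Hya.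
    apply Rpower_pow_inv; [apply Hy | lia].
  - destruct (Hcov _ Hya) as [Hdf HV].
    assert (Hfp : 0 < f (psd_mean a (y ^ n)))
      by (rewrite Hinv by exact Hya; apply pow_lt, Hy).
    destruct (ratio_Derive_root_rescale f _ _ HnR Hfp Hdf) as [Hex Hratio].
    split; [exact Hex|].
    now rewrite <- Hratio, Hdiv, HV.
Qed.
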